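(* Let $\gamma:\mathbb{Z}\to[0,1]$ be a probability distribution on $\mathbb{Z}$ with bounded support and $\gamma(a)\in\mathbb{Q}$ for all $a$. For $n\ge1$ let $\gamma_n$ be the distribution on $\mathbb{Z}_n$ given by $\gamma_n(k)=\sum_{a\equiv k \pmod n}\gamma(a)$. Then either $\gamma$ is symmetric (i.e. $\gamma(a)=\gamma(-a)$ for all $a\in\mathbb{Z}$), or there exists $N$ such that for every prime $n>N$ the random walk on $\mathbb{Z}_n$ with step distribution $\gamma_n$ is reconstructive.
   Context: The random walk on $\mathbb{Z}_n$ with step distribution $\gamma_n$ has $v(1)$ uniform on $\mathbb{Z}_n$ and independent steps with $\mathbb{P}(v(t+1)-v(t)=k)=\gamma_n(k)$. It is reconstructive if, for any two labelings $f_1,f_2:\mathbb{Z}_n\to\{0,1\}$, the distributions of $\{f_1(v(t))\}_{t\ge1}$ and $\{f_2(v(t))\}_{t\ge1}$ coincide only if there is $\ell$ with $f_1(k)=f_2(k+\ell)$ for all $k$. *)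

From mathcomp Require Import all_boot all_order all_algebra.
Set Implicit Arguments. Unset Strict Implicit. Unset Printing Implicit Defensive.
Import Order.TTheory GRing.Theory Num.Theory.
Local Open Scope ring_scope.

Definition window_sum (gamma : int -> rat) (M : nat) : rat :=
  \sum_(i < (M.*2).+1) gamma (i%:Z - M%:Z).

Definition symmetric_distr (gamma : int -> rat) : Prop :=
  forall a : int, gamma a = gamma (- a).

(* gamma_n(k) = sum_{a = k mod n} gamma(a); as supp gamma is inside
   [-M, M], it suffices to sum over that window.  'Z_n is Z/nZ (n >= 2). *)
Definition gamma_n (gamma : int -> rat) (M n : nat) (k : 'Z_n) : rat :=
  \sum_(i < (M.*2).+1)
     (if ((i%:Z - M%:Z)%:~R == k) then gamma (i%:Z - M%:Z) else 0).

(* rest g f v w = P(f(v(2)) = w_1, ..., f(v(|w|+1)) = w_|w| | v(1) = v) *)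
Fixpoint rest_prob (n : nat) (g : 'Z_n -> rat) (f : 'Z_n -> bool)
    (v : 'Z_n) (w : seq bool) : rat :=
  match w with
  | [::] => 1
  | b :: w' => \sum_(u : 'Z_n) g (u - v) * (f u == b)%:R * rest_prob g f u w'
  end.

(* Finite-dimensional law of the label sequence {f(v(t))}_{t>=1}:
   label_law g f w = P(f(v(1)) = w_1, ..., f(v(T)) = w_T), T = size w,
   for the walk with v(1) uniform on Z_n and i.i.d. steps of law g. *)
Definition label_law (n : nat) (g : 'Z_n -> rat) (f : 'Z_n -> bool)
    (w : seq bool) : rat :=
  match w with
  | [::] => 1
  | b :: w' => n%:R^-1 * \sum_(v : 'Z_n) (f v == b)%:R * rest_prob g f v w'
  end.

Definition reconstructive (n : nat) (g : 'Z_n -> rat) : Prop :=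
  forall f1 f2 : 'Z_n -> bool,
    (forall w : seq bool, label_law g f1 w = label_law g f2 w) ->
    exists l : 'Z_n, forall k : 'Z_n, f1 k = f2 (k + l).

Arguments gamma_n gamma M n k : clear implicits.

(* For p prime the transition operator of the walk on Z_p is diagonalised by
   the characters x |-> z^(k x), with eigenvalues
   lambda_k = sum_d gamma_p(d) z^(k d).  Summing the laws of the label words
   1 *^s 1 *^t 1 (each * an arbitrary label) gives the power sums
   sum_(i,k) B(i,k) lambda_i^s lambda_k^t of the bispectrum
   B(i,k) = F(-i) F(i-k) F(k) of the Fourier transform F of the indicator of
   f^-1(1); when the lambda_k are distinct and nonzero these determine B.
   As 1 + X + ... + X^(p-1) is irreducible over Q, a rational vector with a
   vanishing nonzero Fourier coefficient is constant; so F has no zero for a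
   nonconstant labeling, and B then determines F up to a character, i.e. f up
   to a shift.  The same fact gives lambda_k <> 0, and shows that
   lambda_k = lambda_k' with k <> k' makes gamma_p invariant under a dilation
   y |-> d y with d <> 1.  Once p is large compared to the support of gamma,
   the images b, b' of an extremal support point a under d and d^-1 satisfy
   b b' = a^2 in Z, which forces d = -1, i.e. gamma is symmetric. *)

From mathcomp Require Import all_boot all_order all_algebra all_field.
From mathcomp Require Import ring zify.
From Stdlib Require Import FunctionalExtensionality Classical.
Set Implicit Arguments. Unset Strict Implicit. Unset Printing Implicit Defensive.
Import Order.TTheory GRing.Theory Num.Theory.
Local Open Scope ring_scope.

Section Transition.
Variables (n : nat) (R : pzSemiRingType).
Implicit Types (g h : 'Z_n -> R) (v : 'Z_n).

Definition transition g h v : R := \sum_u g (u - v) * h u.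

Definition corr3 g h (s t : nat) : R :=
  \sum_v h v * iter s (transition g) (fun u => h u * iter t (transition g) h u) v.

Definition indicator (f : 'Z_n -> bool) : 'Z_n -> R := fun x => (f x)%:R.

Lemma transition_sum (I : Type) (r : seq I) g (H : I -> 'Z_n -> R) v :
  \sum_(i <- r) transition g (H i) v = transition g (fun u => \sum_(i <- r) H i u) v.
Proof. by rewrite /transition exchange_big; apply: eq_bigr => u _; rewrite mulr_sumr. Qed.

Lemma iter_transition_sum (I : Type) (r : seq I) g (H : I -> 'Z_n -> R) s v :
  \sum_(i <- r) iter s (transition g) (H i) v =
  iter s (transition g) (fun u => \sum_(i <- r) H i u) v.
Proof.
elim: s v => [|s IH] v //=.
by rewrite transition_sum; congr (transition g _ v); apply: functional_extensionality.
Qed.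

End Transition.

Lemma rmorph_iter_transition (n : nat) (R S : pzSemiRingType)
    (f : {rmorphism R -> S}) (g h : 'Z_n -> R) s v :
  f (iter s (transition g) h v) = iter s (transition (f \o g)) (f \o h) v.
Proof.
elim: s v => [|s IH] v //=.
by rewrite rmorph_sum; apply: eq_bigr => u _; rewrite rmorphM IH.
Qed.

Lemma rmorph_corr3 (n : nat) (R S : pzSemiRingType) (f : {rmorphism R -> S})
    (g h : 'Z_n -> R) s t :
  f (corr3 g h s t) = corr3 (f \o g) (f \o h) s t.
Proof.
rewrite rmorph_sum; apply: eq_bigr => v _; rewrite rmorphM rmorph_iter_transition.
congr (_ * iter s _ _ v); apply: functional_extensionality => u.
by rewrite /= rmorphM rmorph_iter_transition.
Qed.

Fixpoint bool_words (k : nat) : seq (seq bool) :=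
  if k is k'.+1 then [seq b :: w | b <- [:: true; false], w <- bool_words k']
  else [:: [::]].

Section LabelLaw.
Variables (n : nat) (g : 'Z_n -> rat) (f : 'Z_n -> bool).

Lemma rest_prob_cons v b w :
  rest_prob g f v (b :: w) = transition g (fun u => (f u == b)%:R * rest_prob g f u w) v.
Proof. by apply: eq_bigr => u _; rewrite mulrA. Qed.

Lemma rest_prob_marginal k w v :
  \sum_(w0 <- bool_words k) rest_prob g f v (w0 ++ w) =
  iter k (transition g) (fun u => rest_prob g f u w) v.
Proof.
elim: k v => [|k IH] v; first by rewrite big_seq1.
rewrite big_allpairs_dep.
under eq_bigr do under eq_bigr do rewrite cat_cons rest_prob_cons.
under eq_bigr do rewrite transition_sum.
rewrite transition_sum; congr (transition g _ v); apply: functional_extensionality => u.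
under eq_bigr do rewrite -mulr_sumr IH.
by rewrite !big_cons big_nil; case: (f u); rewrite /= ?mul1r ?mul0r ?addr0 ?add0r.
Qed.

Lemma label_law_corr3 s t :
  \sum_(w1 <- bool_words s) \sum_(w2 <- bool_words t)
     label_law g f (true :: w1 ++ true :: w2 ++ [:: true]) =
  n%:R^-1 * corr3 g (indicator rat f) s.+1 t.+1.
Proof.
rewrite /label_law.
under eq_bigr do rewrite -mulr_sumr.
rewrite -mulr_sumr; congr (_ * _).
under eq_bigr do rewrite exchange_big.
rewrite exchange_big; apply: eq_bigr => v _.
under eq_bigr do rewrite -mulr_sumr.
rewrite -mulr_sumr eqb_id; congr (_ * _).
rewrite exchange_big.
under eq_bigr do rewrite rest_prob_marginal.
rewrite iter_transition_sum iterSr; congr (iter s (transition g) _ v).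
apply: functional_extensionality => u.
under eq_bigr do rewrite rest_prob_cons.
rewrite transition_sum; congr (transition g _ u); apply: functional_extensionality => x.
rewrite -mulr_sumr rest_prob_marginal iterSr eqb_id.
congr (_ * iter t (transition g) _ x).
apply: functional_extensionality => y.
by rewrite rest_prob_cons /transition; apply: eq_bigr => u' _; rewrite mulr1 eqb_id.
Qed.

Lemma label_law_single b :
  label_law g f [:: b] = n%:R^-1 * \sum_v (f v == b)%:R.
Proof. by congr (_ * _); apply: eq_bigr => v _; rewrite /= mulr1. Qed.

End LabelLaw.

Lemma label_law_const (n : nat) (g : 'Z_n -> rat) (f1 f2 : 'Z_n -> bool) b :
  (0 < n)%N -> (forall v, f1 v = b) ->
  label_law g f1 [:: ~~ b] = label_law g f2 [:: ~~ b] -> forall v, f2 v = b.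
Proof.
move=> n_gt0 f1b; rewrite !label_law_single => /mulfI.
rewrite invr_eq0 pnatr_eq0 -lt0n n_gt0 => /(_ isT).
rewrite big1 => [/esym/eqP|v _]; last by rewrite f1b; case: b f1b.
rewrite psumr_eq0 => [/allP f2b v|v _]; last exact: ler0n.
by move: (f2b v (mem_index_enum _)); case: (f2 v); case: b {f1b f2b}.
Qed.

Section PowerSums.
Variables (F : fieldType) (I : finType) (L : I -> F).
Hypotheses (L_inj : injective L) (L_neq0 : forall i, L i != 0).

Lemma power_sums_eq0 (c : I -> F) :
  (forall s, \sum_i c i * L i ^+ s.+1 = 0) -> forall i, c i = 0.
Proof.
move=> H i0.
pose P := \prod_(j | j != i0) ('X - (L j)%:P).
have : \sum_(s < size P) P`_s * (\sum_i c i * L i ^+ s.+1) = 0.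
  by rewrite big1 // => s _; rewrite H mulr0.
have -> : \sum_(s < size P) P`_s * (\sum_i c i * L i ^+ s.+1) =
          \sum_i c i * L i * P.[L i].
  under eq_bigr do rewrite mulr_sumr.
  rewrite exchange_big /=; apply: eq_bigr => i _.
  rewrite horner_coef mulr_sumr; apply: eq_bigr => s _; rewrite exprS; ring.
rewrite (bigD1 i0) //= big1 ?addr0 => [|i ni].
  move/eqP; rewrite !mulf_eq0 (negbTE (L_neq0 i0)) orbF => /orP [/eqP //|].
  rewrite horner_prod; move/prodf_neq0 => [] j nj.
  by rewrite hornerXsubC subr_eq0; apply/eqP => /L_inj e; rewrite e eqxx in nj.
by rewrite horner_prod (bigD1 i) //= hornerXsubC subrr !mul0r mulr0.
Qed.

Lemma double_power_sums_eq0 (D : I -> I -> F) :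
  (forall s t, \sum_i \sum_j D i j * L i ^+ s.+1 * L j ^+ t.+1 = 0) ->
  forall i j, D i j = 0.
Proof.
move=> H i; apply: power_sums_eq0 => t; move: i.
apply: (power_sums_eq0 (c := fun i => \sum_j D i j * L j ^+ t.+1)) => s.
rewrite -[RHS](H s t); apply: eq_bigr => i _.
by rewrite mulr_suml; apply: eq_bigr => j _; ring.
Qed.

End PowerSums.

Section ZpArith.
Variable m : nat.
Local Notation p := m.+2.

Lemma Zp_intr_eq0 (a : int) : ((a%:~R : 'Z_p) == 0) = (p %| `|a|)%N.
Proof.
have hn (k : nat) : ((k%:R : 'Z_p) == 0) = (p %| k)%N.
  by rewrite -val_eqE /= val_Zp_nat.
case: a => k; first exact: hn.
by rewrite NegzE mulrNz oppr_eq0 -pmulrn hn.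
Qed.

Lemma eq_Zp_intr (a b : int) :
  (`|a - b| < p)%N -> ((a%:~R : 'Z_p) == b%:~R) = (a == b).
Proof.
move=> h; rewrite -subr_eq0 -intrB Zp_intr_eq0 -(subr_eq0 a b).
have [->|nz] := eqVneq (a - b) 0; first by rewrite dvdn0.
apply/negbTE/negP => /(dvdn_leq _); rewrite absz_gt0 nz => /(_ isT).
by rewrite leqNgt h.
Qed.

Lemma Zp_unit_prime (y : 'Z_p) : prime p -> y != 0 -> y \is a GRing.unit.
Proof.
move=> pr ny; rewrite -(natr_Zp y) unitZpE // prime_coprime //.
have ypos : (0 < y)%N by rewrite lt0n; apply: contra ny => /eqP e; apply/eqP/val_inj.
by apply/negP => /(dvdn_leq ypos); rewrite leqNgt ltn_ord.
Qed.

Lemma Zp_opp1_neq1 : (2 < p)%N -> (-1 : 'Z_p) != 1.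
Proof.
move=> p2; rewrite -subr_eq0 -opprD oppr_eq0 (_ : 1 + 1 = 2%:~R) // Zp_intr_eq0.
by apply/negP => /(dvdn_leq (isT : 0 < 2)%N); rewrite leqNgt p2.
Qed.

End ZpArith.

Lemma prim_root_rat_poly_coef (p : nat) (w : algC) (P : {poly rat}) :
  prime p -> p.-primitive_root w -> (size P <= p)%N ->
  root (map_poly ratr P) w -> forall i, (i < p)%N -> P`_i = P`_0.
Proof.
move=> pr wP szP rootP.
pose U := \poly_(i < p) (1 : rat).
have szU : size U = p by rewrite size_poly_eq // oner_neq0.
have rootU : root (map_poly ratr U) w.
  have w1 : w - 1 != 0.
    rewrite subr_eq0 -[w]expr1 -(prim_order_dvd wP) dvdn1.
    by rewrite neq_ltn prime_gt1 ?orbT.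
  rewrite /root (horner_coef_wide _ (eq_leq (etrans (size_map_poly _ _) szU))).
  under eq_bigr do rewrite coef_map coef_poly ltn_ord /= rmorph1 mul1r.
  by rewrite -(mulrI_eq0 _ (lregP w1)) -subrX1 (prim_expr_order wP) subrr.
have [r [Dr _] dvr] := minCpolyP w.
have szr : size r = p.
  have := size_cyclotomic w p.
  rewrite -(minCpoly_cyclotomic wP) Dr size_map_poly totient_prime //.
  by rewrite prednK ?prime_gt0.
have rU : r %= U by rewrite -dvdp_size_eqp -?dvr // szr szU.
have [q Pq] : exists q, P = q * U.
  by apply/dvdpP; rewrite -(eqp_dvdl _ rU) -dvr.
have szq : (size q <= 1)%N.
  have [-> | q0] := eqVneq q 0; first by rewrite size_poly0.
  have U0 : U != 0 by rewrite -size_poly_eq0 szU -lt0n prime_gt0.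
  by move: szP; rewrite Pq size_mul // szU; case: (size q) => // k; rewrite addSn /=; lia.
have Pi i : (i < p)%N -> P`_i = q`_0.
  by move=> ip; rewrite Pq {1}(size1_polyC szq) coefCM coef_poly ip mulr1.
by move=> i ip; rewrite !Pi ?prime_gt0.
Qed.

Section Fourier.
Variables (m : nat) (z : algC).
Local Notation p := m.+2.
Hypothesis zP : p.-primitive_root z.

Definition chi (x : 'Z_p) : algC := z ^+ x.

Lemma chiD x y : chi (x + y) = chi x * chi y.
Proof. by rewrite /chi /= prim_expr_mod // exprD. Qed.

Lemma chi0 : chi 0 = 1.
Proof. by rewrite /chi expr0. Qed.

Lemma chi_eq1 x : (chi x == 1) = (x == 0).
Proof.
rewrite /chi -(prim_order_dvd zP); apply/idP/eqP => [|->] //.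
case: x => [[|x]] lt; first by move=> _; apply: val_inj.
by move=> /(dvdn_leq (ltn0Sn x)); rewrite leqNgt lt.
Qed.

Lemma sum_chi x : \sum_(k : 'Z_p) chi (k * x) = if x == 0 then p%:R else 0.
Proof.
have [->|nx] := eqVneq x 0.
  by under eq_bigr do rewrite mulr0 chi0; rewrite sumr_const card_ord.
set S := \sum_k _.
have : S = chi x * S.
  rewrite {1}/S (reindex_inj (addrI 1)) /= mulr_sumr.
  by apply: eq_bigr => k _; rewrite mulrDl mul1r chiD.
move/eqP; rewrite -subr_eq0 -{1}[S]mul1r -mulrBl mulf_eq0 subr_eq0 eq_sym chi_eq1.
by rewrite (negbTE nx) => /eqP.
Qed.

Lemma p_neq0 : p%:R != 0 :> algC.
Proof. by rewrite pnatr_eq0. Qed.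

Definition dft (h : 'Z_p -> algC) (k : 'Z_p) : algC :=
  p%:R^-1 * \sum_y h y * chi (- (k * y)).

Lemma dft_inv h x : h x = \sum_k dft h k * chi (k * x).
Proof.
rewrite /dft.
under eq_bigr do rewrite -mulrA mulr_suml.
rewrite -mulr_sumr exchange_big /=.
under eq_bigr => y _.
  under eq_bigr do rewrite -mulrA -chiD addrC -mulrBr.
  rewrite -mulr_sumr sum_chi subr_eq0.
  over.
rewrite (bigD1 x) //= eqxx big1 => [|y /negbTE]; last first.
  by rewrite eq_sym => ->; rewrite mulr0.
by rewrite addr0 mulrC mulfK // p_neq0.
Qed.

Lemma dft0 h : dft h 0 = p%:R^-1 * \sum_y h y.
Proof.
by congr (_ * _); apply: eq_bigr => y _; rewrite mul0r oppr0 chi0 mulr1.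
Qed.

Lemma shift_of_dft h1 h2 (l : 'Z_p) :
  (forall k, dft h1 k = chi (k * l) * dft h2 k) -> forall x, h1 x = h2 (x + l).
Proof.
move=> hF x; rewrite (dft_inv h1) (dft_inv h2); apply: eq_bigr => k _.
by rewrite hF mulrDr chiD; ring.
Qed.

Definition eigval (g : 'Z_p -> algC) (k : 'Z_p) : algC := \sum_d g d * chi (k * d).

Lemma eigval0 g : eigval g 0 = \sum_d g d.
Proof. by apply: eq_bigr => d _; rewrite mul0r chi0 mulr1. Qed.

Lemma iter_transition_chi g (c : 'Z_p -> algC) s :
  iter s (transition g) (fun v => \sum_k c k * chi (k * v)) =
  (fun v => \sum_k c k * eigval g k ^+ s * chi (k * v)).
Proof.
elim: s => [|s IH] /=.
  by apply: functional_extensionality => v; apply: eq_bigr => k _; rewrite mulr1.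
apply: functional_extensionality => v; rewrite IH /transition /=.
under eq_bigr do rewrite mulr_sumr.
rewrite exchange_big /=; apply: eq_bigr => k _.
set e := eigval g k ^+ s.
rewrite (reindex_inj (addIr v)) /= exprS -/e /eigval mulr_suml mulr_sumr mulr_suml.
by apply: eq_bigr => d _; rewrite addrK mulrDr chiD; ring.
Qed.

Lemma corr3_dft g h s t : corr3 g h s t = p%:R * \sum_i \sum_k
   dft h (- i) * dft h (i - k) * dft h k * eigval g i ^+ s * eigval g k ^+ t.
Proof.
have hE : h = fun v => \sum_k dft h k * chi (k * v).
  by apply: functional_extensionality => v; exact: dft_inv.
have H1 : iter t (transition g) h =
    fun v => \sum_k (dft h k * eigval g k ^+ t) * chi (k * v).
  by rewrite {1}hE iter_transition_chi.
have H2 : (fun u => h u * iter t (transition g) h u) = fun u =>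
    \sum_i (\sum_k dft h (i - k) * (dft h k * eigval g k ^+ t)) * chi (i * u).
  apply: functional_extensionality => u; rewrite H1 /= [h u]dft_inv mulr_suml.
  under [RHS]eq_bigr do rewrite mulr_suml.
  rewrite [RHS]exchange_big /=.
  under eq_bigr do rewrite mulr_sumr.
  rewrite exchange_big /=; apply: eq_bigr => k _.
  rewrite [RHS](reindex_inj (addIr k)) /=; apply: eq_bigr => j _.
  by rewrite addrK mulrDl chiD; ring.
rewrite /corr3 H2 iter_transition_chi.
under eq_bigr do rewrite mulr_sumr.
rewrite exchange_big /= mulr_sumr; apply: eq_bigr => i _.
have hF : \sum_v h v * chi (i * v) = p%:R * dft h (- i).
  rewrite /dft mulrA mulfV ?p_neq0 // mul1r.
  by apply: eq_bigr => v _; rewrite mulNr opprK.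
transitivity ((\sum_v h v * chi (i * v)) *
    ((\sum_k dft h (i - k) * (dft h k * eigval g k ^+ t)) * eigval g i ^+ s)).
  by rewrite mulr_suml; apply: eq_bigr => v _; ring.
rewrite hF -mulrA; congr (_ * _); rewrite !mulr_suml mulr_sumr.
by apply: eq_bigr => k _; ring.
Qed.

Lemma Zp_char_chi (r : 'Z_p -> algC) :
  r 0 = 1 -> {morph r : a b / a + b >-> a * b} ->
  exists l : 'Z_p, forall k, r k = chi (k * l).
Proof.
move=> r0 rD.
have rn k : r k%:R = r 1 ^+ k.
  by elim: k => [|k IH]; rewrite ?r0 // mulrSr rD IH exprSr.
have r1p : r 1 ^+ p = 1 by rewrite -rn pchar_Zp.
have [l hl] := prim_rootP zP r1p.
exists l => k.
by rewrite -[k in r k]natr_Zp rn hl -exprM /chi /= prim_expr_mod // mulnC.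
Qed.

Lemma bispectrum_shift (F1 F2 : 'Z_p -> algC) :
  (forall i k, F1 (- i) * F1 (i - k) * F1 k = F2 (- i) * F2 (i - k) * F2 k) ->
  F1 0 = F2 0 -> (forall k, F1 k != 0) ->
  exists l, forall k, F1 k = chi (k * l) * F2 k.
Proof.
move=> hB h0 F1_neq0.
have F2_neq0 k : F2 k != 0.
  apply: contra (F1_neq0 k) => /eqP F2k; have := hB k k.
  by rewrite subrr F2k mulr0 => /eqP; rewrite !mulf_eq0 !(negbTE (F1_neq0 _)).
pose r k := F1 k / F2 k.
have Fr k : F1 k = r k * F2 k by rewrite divfK.
have r0 : r 0 = 1 by rewrite /r h0 divff.
have r3 i k : r (- i) * r (i - k) * r k = 1.
  apply: (mulIf (x := F2 (- i) * F2 (i - k) * F2 k)); first by rewrite !mulf_neq0.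
  by have := hB i k; rewrite !Fr mul1r => e; rewrite -[RHS]e; ring.
have rN k : r (- k) * r k = 1 by have := r3 k k; rewrite subrr r0 mulr1.
have r_neq0 k : r k != 0.
  by apply/eqP => rk0; move: (rN k); rewrite rk0 mulr0 => /esym/eqP; rewrite oner_eq0.
have [l hl] : exists l, forall k, r k = chi (k * l).
  apply: Zp_char_chi => // a b; have := r3 (a + b) b; rewrite addrK => e.
  by apply: (mulfI (r_neq0 (- (a + b)))); rewrite rN -e; ring.
by exists l => k; rewrite Fr hl.
Qed.

Lemma dft_rat_const (c : 'Z_p -> rat) k : prime p -> k != 0 ->
  \sum_y ratr (c y) * chi (k * y) = 0 -> forall y, c y = c 0.
Proof.
move=> pr k0 H.
have kpos : (0 < k)%N by rewrite lt0n; apply: contra k0 => /eqP e; apply/eqP/val_inj.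
have wP : p.-primitive_root (z ^+ k).
  rewrite prim_root_exp_coprime // coprime_sym prime_coprime //.
  by apply/negP => /(dvdn_leq kpos); rewrite leqNgt ltn_ord.
pose P := \poly_(i < p) c i%:R.
have szP : (size P <= p)%N := size_poly _ _.
have rootP : root (map_poly ratr P) (z ^+ k).
  rewrite /root (horner_coef_wide _ (leq_trans (eq_leq (size_map_poly _ _)) szP)).
  apply/eqP; rewrite -[RHS]H; apply: eq_bigr => i _.
  by rewrite coef_map coef_poly ltn_ord natr_Zp /chi /= prim_expr_mod // exprM.
move=> y; have := prim_root_rat_poly_coef pr wP szP rootP (ltn_ord y).
by rewrite !coef_poly ltn_ord prime_gt0 // natr_Zp.
Qed.

End Fourier.

Section Reconstruction.
Variables (m : nat) (z : algC).
Local Notation p := m.+2.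
Hypothesis zP : p.-primitive_root z.
Hypothesis p_prime : prime p.
Variable g : 'Z_p -> rat.
Hypothesis eigval_inj : injective (eigval z (ratr \o g)).
Hypothesis eigval_neq0 : forall k, eigval z (ratr \o g) k != 0.

Local Notation dft_label f := (dft z (indicator algC f)).

Lemma ratr_indicator (f : 'Z_p -> bool) : ratr \o indicator rat f = indicator algC f.
Proof. by apply: functional_extensionality => x; rewrite /= rmorph_nat. Qed.

Lemma indicator_inj (f1 f2 : 'Z_p -> bool) x y :
  indicator algC f1 x = indicator algC f2 y -> f1 x = f2 y.
Proof. by move/eqP; rewrite eqr_nat; case: (f1 x); case: (f2 y). Qed.

Lemma dft_label_neq0 (f : 'Z_p -> bool) :
  ~~ [forall y, f y == f 0] -> forall k, dft_label f k != 0.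
Proof.
rewrite negb_forall => /existsP [y fy] k.
have [->|k0] := eqVneq k 0.
  rewrite dft0 mulf_eq0 invr_eq0 (negbTE (p_neq0 m)) /= -(ratr_indicator f).
  rewrite -rmorph_sum fmorph_eq0 psumr_eq0 => [|v _]; last exact: ler0n.
  apply/allP => f0; move: fy (f0 y (mem_index_enum _)) (f0 0 (mem_index_enum _)).
  by rewrite /indicator; case: (f y); case: (f 0).
rewrite /dft mulf_eq0 invr_eq0 (negbTE (p_neq0 m)) /=; apply/eqP => H.
have : \sum_y ratr (indicator rat f y) * chi z (- k * y) = 0.
  by rewrite -[RHS]H; apply: eq_bigr => x _; rewrite rmorph_nat mulNr.
move/(dft_rat_const zP p_prime); rewrite oppr_eq0 => /(_ k0 y) /eqP.
by rewrite /indicator eqr_nat; case: (f y) (f 0) fy => [] [].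
Qed.

Section EqualLaws.
Variables f1 f2 : 'Z_p -> bool.
Hypothesis eq_laws : forall w, label_law g f1 w = label_law g f2 w.

Lemma eq_laws_dft0 : dft_label f1 0 = dft_label f2 0.
Proof.
have := eq_laws [:: true]; rewrite !label_law_single => /mulfI.
rewrite invr_eq0 pnatr_eq0 => /(_ isT).
under eq_bigr do rewrite eqb_id; under [X in _ = X -> _]eq_bigr do rewrite eqb_id.
by move=> e; rewrite !dft0 -!(ratr_indicator _) /= -!(rmorph_sum ratr) e.
Qed.

Lemma eq_laws_bispectrum i k :
  dft_label f1 (- i) * dft_label f1 (i - k) * dft_label f1 k =
  dft_label f2 (- i) * dft_label f2 (i - k) * dft_label f2 k.
Proof.
apply/eqP; rewrite -subr_eq0; apply/eqP; move: i k.
apply: (double_power_sums_eq0 eigval_inj eigval_neq0) => s t.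
have : corr3 (ratr \o g) (indicator algC f1) s.+1 t.+1 =
       corr3 (ratr \o g) (indicator algC f2) s.+1 t.+1.
  have e := congr1 (@ratr algC) (label_law_corr3 g f1 s t).
  rewrite (eq_bigr _ (fun w1 _ => eq_bigr _ (fun w2 _ => eq_laws _))) in e.
  move: e; rewrite label_law_corr3 !rmorphM !rmorph_corr3 !ratr_indicator.
  by move/mulfI => ->; rewrite // fmorph_eq0 invr_eq0 pnatr_eq0.
rewrite !(corr3_dft zP) => /(mulfI (p_neq0 m)) e.
rewrite -[RHS](subrr (\sum_i \sum_j dft_label f2 (- i) * dft_label f2 (i - j) *
  dft_label f2 j * eigval z (ratr \o g) i ^+ s.+1 * eigval z (ratr \o g) j ^+ t.+1)).
rewrite -{1}e -sumrB; apply: eq_bigr => i _; rewrite -sumrB.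
by apply: eq_bigr => j _; rewrite !mulrBl.
Qed.

End EqualLaws.

Lemma reconstructive_of_eigval : reconstructive g.
Proof.
move=> f1 f2 eq_laws.
have [/forallP f1_const | f1_nconst] := boolP [forall y, f1 y == f1 0].
  exists 0 => k; rewrite addr0 (eqP (f1_const k)); apply/esym.
  by apply: (label_law_const _ _ (eq_laws _)) => // v; apply/eqP.
have [l hl] := bispectrum_shift zP (eq_laws_bispectrum eq_laws)
  (eq_laws_dft0 eq_laws) (dft_label_neq0 f1_nconst).
by exists l => x; apply: indicator_inj; exact: shift_of_dft hl x.
Qed.

End Reconstruction.

Lemma mul_eq_sqr_absz (a b b' : int) :
  (`|b| <= `|a|)%N -> (`|b'| <= `|a|)%N -> b * b' = a * a -> b = a \/ b = - a.
Proof.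
move=> hb hb' e.
have : (`|b| * `|b'| = `|a| * `|a|)%N by rewrite -!abszM e.
move: hb hb'; set A := `|a|%N; set B := `|b|%N; set B' := `|b'|%N => hb hb' e'.
have eB : B = A by nia.
by rewrite /B in eB; lia.
Qed.

Section Distribution.
Variables (gamma : int -> rat) (M : nat).
Hypothesis hsupp : forall a : int, (M < `|a|)%N -> gamma a = 0.
Hypothesis hsum : window_sum gamma M = 1.

Lemma gamma_supp_bound a : gamma a != 0 -> (`|a| <= M)%N.
Proof. by apply: contraR; rewrite -ltnNge => /hsupp ->. Qed.

Lemma gamma_extremal :
  exists a, gamma a != 0 /\ forall b, gamma b != 0 -> (`|b| <= `|a|)%N.
Proof.
pose P k := (gamma k%:Z != 0) || (gamma (- k%:Z) != 0).
have P_absz a : gamma a != 0 -> P `|a|%N.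
  by case: a => k gk; rewrite /P /= -?NegzE gk ?orbT.
have [a0 ga0] : exists a, gamma a != 0.
  have /existsP [i gi] : [exists i : 'I_(M.*2).+1, gamma (i%:Z - M%:Z) != 0].
    apply: contraT; rewrite negb_exists => /forallP g0; move: hsum.
    rewrite /window_sum big1 => [/eqP|i _]; last exact/eqP/negPn.
    by rewrite eq_sym oner_eq0.
  by exists (i%:Z - M%:Z).
have boundP k : P k -> (k <= M)%N.
  by case/orP => /gamma_supp_bound; rewrite ?abszN.
have exP : exists k, P k by exists `|a0|%N; exact: P_absz.
have [k Pk kmax] := ex_maxnP exP boundP.
have bmax b : gamma b != 0 -> (`|b| <= k)%N by move/P_absz/kmax.
by case/orP: Pk => gk; [exists k | exists (- k%:Z)]; rewrite ?abszN.
Qed.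

Lemma symmetric_of_supp0 : (forall b, b != 0 -> gamma b = 0) -> symmetric_distr gamma.
Proof.
move=> supp0 b; have [->|b0] := eqVneq b 0; first by rewrite oppr0.
by rewrite !supp0 ?oppr_eq0.
Qed.

End Distribution.

Section Reduction.
Variables (gamma : int -> rat) (M : nat).
Hypothesis hsupp : forall a : int, (M < `|a|)%N -> gamma a = 0.
Hypothesis hsum : window_sum gamma M = 1.
Variable m : nat.
Local Notation p := m.+2.
(* Reduction mod [p] is injective on integers of absolute value at most [M * M + M]. *)
Hypothesis p_large : (2 * M * M + 2 * M + 2 < p)%N.
Local Notation g := (gamma_n gamma M p).

Lemma sum_gamma_n : \sum_y g y = 1.
Proof.
rewrite -hsum /gamma_n exchange_big /=; apply: eq_bigr => i _.
rewrite (bigD1 ((i%:Z - M%:Z)%:~R)) //= eqxx big1 ?addr0 // => y /negbTE.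
by rewrite eq_sym => ->.
Qed.

Lemma gamma_n_intr (a : int) : (`|a| <= M)%N -> g a%:~R = gamma a.
Proof.
move=> ha.
have i0lt : (`|(a + M%:Z)%R| < (M.*2).+1)%N by lia.
rewrite /gamma_n (bigD1 (Ordinal i0lt)) //= big1 ?addr0.
  have -> : `|(a + M%:Z)%R|%:Z - M%:Z = a by lia.
  by rewrite eqxx.
move=> i ni; rewrite eq_Zp_intr; last by have := ltn_ord i; lia.
case: eqP => // e; move: ni; rewrite -val_eqE /= => /negP; case; apply/eqP.
lia.
Qed.

Lemma gamma_n_support (y : 'Z_p) : g y != 0 ->
  exists a : int, [/\ (`|a| <= M)%N, y = a%:~R & gamma a != 0].
Proof.
move=> gy.
have [/existsP [i /andP [/eqP e ne]] | ] := boolP [exists i : 'I_((M.*2).+1),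
    ((i%:Z - M%:Z)%:~R == y) && (gamma (i%:Z - M%:Z) != 0)].
  by exists (i%:Z - M%:Z); split => //; have := ltn_ord i; lia.
rewrite negb_exists => /forallP hi; move: gy; rewrite /gamma_n big1 ?eqxx // => i _.
by have := hi i; rewrite negb_and negbK; case: eqP => //= _ /eqP ->.
Qed.

Lemma gamma_n_outside : g (M.+1%:Z)%:~R = 0.
Proof.
apply/eqP; apply: contraT => /gamma_n_support [a [ha /eqP e _]].
by move: e; rewrite eq_Zp_intr; lia.
Qed.

Lemma outside_neq0 : ((M.+1%:Z)%:~R : 'Z_p) != 0.
Proof. by rewrite Zp_intr_eq0; apply/negP => /dvdn_leq; lia. Qed.

Lemma gamma_n_nonconst (y0 : 'Z_p) : ~ (forall y, g y = g y0).
Proof.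
move=> g_const; have := sum_gamma_n; under eq_bigr do rewrite g_const.
by rewrite -(g_const (M.+1%:Z)%:~R) gamma_n_outside big1.
Qed.

Hypothesis p_prime : prime p.

Lemma dilation_image (e : 'Z_p) (a : int) :
  (forall y, g (e * y) = g y) -> gamma a != 0 ->
  (forall b, gamma b != 0 -> (`|b| <= `|a|)%N) ->
  exists2 b : int, e * a%:~R = b%:~R & (`|b| <= `|a|)%N.
Proof.
move=> he ga amax.
have : g (e * a%:~R) != 0 by rewrite he gamma_n_intr ?(gamma_supp_bound hsupp).
by case/gamma_n_support => b [_ -> gb]; exists b => //; exact: amax.
Qed.

Lemma dilation_extremal d (a : int) : d != 1 -> (forall y, g (d * y) = g y) ->
  a != 0 -> gamma a != 0 -> (forall b, gamma b != 0 -> (`|b| <= `|a|)%N) -> d = -1.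
Proof.
move=> d1 hd a0 ga amax.
have d0 : d != 0.
  by apply/eqP => d0; apply: (gamma_n_nonconst (y0 := 0)) => y; rewrite -(hd y) d0 mul0r.
have du := Zp_unit_prime p_prime d0.
have hd' y : g (d^-1 * y) = g y by rewrite -[in RHS](mulVKr du y) hd.
have ha := gamma_supp_bound hsupp ga.
have [b eb hb] := dilation_image hd ga amax.
have [b' eb' hb'] := dilation_image hd' ga amax.
have bb' : b * b' = a * a.
  apply/eqP; rewrite -(eq_Zp_intr (m := m)); last first.
    have : (`|(b * b')%R| <= M * M)%N by rewrite abszM leq_mul //; lia.
    have : (`|(a * a)%R| <= M * M)%N by rewrite abszM leq_mul.
    lia.
  by rewrite !intrM -eb -eb' mulrACA mulrV // mul1r.
have au : (a%:~R : 'Z_p) \is a GRing.unit.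
  by apply: Zp_unit_prime; rewrite // Zp_intr_eq0; apply/negP => /dvdn_leq; lia.
case: (mul_eq_sqr_absz hb hb' bb') => eba; move: eb; rewrite eba.
  by rewrite -{2}[_%:~R]mul1r => /(mulIr au) /eqP; rewrite (negbTE d1).
by rewrite intrN -[- _]mulN1r; apply: mulIr.
Qed.

Lemma symmetric_of_dilation d : d != 1 -> (forall y, g (d * y) = g y) ->
  symmetric_distr gamma.
Proof.
move=> d1 hd.
have [a [ga amax]] := gamma_extremal hsupp hsum.
have [a0|a0] := eqVneq a 0.
  apply: symmetric_of_supp0 => b; apply: contraNeq => /amax.
  by rewrite a0 leqn0 absz_eq0.
have dm1 := dilation_extremal d1 hd a0 ga amax.
move=> b; have [hb|hb] := leqP `|b| M; last by rewrite !hsupp ?abszN.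
by rewrite -gamma_n_intr // -(gamma_n_intr (a := - b)) ?abszN // intrN -mulN1r -dm1 hd.
Qed.

Variable z : algC.
Hypothesis zP : p.-primitive_root z.
Local Notation eigval_g := (eigval z (ratr \o g)).

Lemma eigval_g0 : eigval_g 0 = 1.
Proof. by rewrite eigval0 -(rmorph1 (@ratr algC)) -sum_gamma_n rmorph_sum. Qed.

Lemma eigval_g_neq0 k : eigval_g k != 0.
Proof.
have [->|k0] := eqVneq k 0; first by rewrite eigval_g0 oner_neq0.
by apply/eqP => /(dft_rat_const zP p_prime k0); apply: gamma_n_nonconst.
Qed.

Lemma gamma_n_delta k : k != 0 -> eigval_g k = 1 -> forall y, g y = (y == 0)%:R.
Proof.
move=> k0 e.
have : \sum_y ratr (g y - (y == 0)%:R) * chi z (k * y) = 0.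
  under eq_bigr do rewrite rmorphB rmorph_nat mulrBl.
  rewrite sumrB -/(eigval_g k) e (bigD1 0) //= mulr0 chi0 mulr1 big1 ?addr0 ?subrr //.
  by move=> y /negbTE ->; rewrite mul0r.
move/(dft_rat_const zP p_prime k0) => c_const y; apply/eqP.
rewrite -subr_eq0 c_const -(c_const (M.+1%:Z)%:~R) gamma_n_outside.
by rewrite (negbTE outside_neq0) subrr.
Qed.

Lemma eigval_eq_dilation k k' : k != k' -> eigval_g k = eigval_g k' ->
  exists2 d, d != 1 & forall y, g (d * y) = g y.
Proof.
wlog k0 : k k' / k != 0.
  move=> hwlog nkk e; have [k_0|k0] := eqVneq k 0; last exact: hwlog k0 nkk e.
  move: nkk e; rewrite k_0 eq_sym => nk.
  by move=> /esym; apply: hwlog.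
move=> nkk e.
have [k'0|k'0] := eqVneq k' 0.
  have delta := gamma_n_delta k0 (etrans e (etrans (congr1 _ k'0) eigval_g0)).
  exists (-1); first by apply: Zp_opp1_neq1; lia.
  by move=> y; rewrite !delta mulN1r oppr_eq0.
pose d := k'^-1 * k.
have du : d \is a GRing.unit by rewrite unitrM unitrV !Zp_unit_prime.
have kd : k' * d = k by rewrite mulrA mulrV ?mul1r ?Zp_unit_prime.
exists d; first by apply: contra nkk => /eqP d1; rewrite -kd d1 mulr1.
have : \sum_y ratr (g y - g (d * y)) * chi z (k * y) = 0.
  under eq_bigr do rewrite rmorphB mulrBl.
  rewrite sumrB -/(eigval_g k) e /eigval (reindex_inj (mulrI du)) /= -sumrB.
  by rewrite big1 // => y _; rewrite mulrA kd subrr.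
move/(dft_rat_const zP p_prime k0) => c_const y.
by apply/eqP; rewrite eq_sym -subr_eq0 c_const mulr0 subrr.
Qed.

End Reduction.

Theorem theorem4 (gamma : int -> rat) (M : nat)
  (hpos : forall a : int, 0 <= gamma a)
  (hsupp : forall a : int, (M < `|a|)%N -> gamma a = 0)
  (hsum : window_sum gamma M = 1) :
  symmetric_distr gamma \/
  exists N : nat, forall n : nat, prime n -> (N < n)%N ->
    reconstructive (gamma_n gamma M n).
Proof.
have [sym|asym] := classic (symmetric_distr gamma); [by left | right].
exists (2 * M * M + 2 * M + 2) => -[|[|m]] // p_prime p_large.
have [z zP] := C_prim_root_exists (ltn0Sn m.+1).
apply: (reconstructive_of_eigval zP p_prime); last first.
  exact: eigval_g_neq0.
move=> k k' e; apply/eqP; apply: contraT => nkk.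
have [d d1 hd] := eigval_eq_dilation hsum p_large p_prime zP nkk e.
by case: asym; apply: (symmetric_of_dilation hsupp hsum p_large p_prime d1).
Qed.
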